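(* Let $h,k,m$ be integers with $h\ge1$, $k\ge1$, $\gcd(h,k)=1$, $1\le m\le d=h+k$. Then $\det A_m(h,k)=(-1)^{(d-1)(m-1)}\left[\frac{k}{d}\right]$. In particular $\det K(h,k)=\left[\frac{k}{d}\right]$.
   Context: For $h,k\ge1$ coprime and $d=h+k$, $A_m(h,k)$ ($1\le m\le d$) is the $d\times d$ permutation matrix with $(i,j)$ entry $1$ if $j=\sigma(i)$ and $0$ otherwise, where $\sigma(i)\in\{1,\dots,d\}$ is determined by $\sigma(i)\equiv ki+m-k\pmod d$. The $(d,d)$ entry of $A_k(h,k)$ is $1$, and $K(h,k)$ is the $(d-1)\times(d-1)$ upper-left block of $A_k(h,k)$ (so $A_k(h,k)=\begin{pmatrix}K(h,k)&0\\0&1\end{pmatrix}$). For integers $d\ge1$, $k$ with $\gcd(d,k)=1$, $\left[\frac{k}{d}\right]$ denotes the signature of the permutation $x\mapsto kx$ of $\mathbb{Z}/d\mathbb{Z}$. *)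

From mathcomp Require Import all_boot all_order all_algebra all_fingroup.
Set Implicit Arguments. Unset Strict Implicit. Unset Printing Implicit Defensive.
Import GRing.Theory Num.Theory.
Local Open Scope ring_scope.

(* Z/dZ is represented by 'I_d = {0,...,d-1}. *)
Lemma ord_pos (d : nat) (x : 'I_d) : (0 < d)%N.
Proof. exact: leq_ltn_trans (leq0n x) (ltn_ord x). Qed.

Definition mulmod (d k : nat) (x : 'I_d) : 'I_d :=
  Ordinal (ltn_pmod (k * x) (ord_pos x)).

(* [k/d] : the signature of the permutation x |-> k x of Z/dZ
   (0 by convention if it is not a permutation, i.e. gcd(d,k) <> 1). *)
Definition jsym (d k : nat) : int :=
  match [pick s : 'S_d | [forall x, s x == mulmod k x]] with
  | Some s => (-1) ^+ (odd_perm s)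
  | None => 0
  end.

(* A_m(h,k), with rows/columns i,j in {1..d} encoded as i.+1, j.+1 for
   i, j : 'I_d : entry (i,j) is 1 iff j = sigma(i), where sigma(i) in {1..d}
   and sigma(i) = k i + m - k (mod d). *)
Definition Amat (h k m : nat) : 'M[int]_(h + k) :=
  \matrix_(i < h + k, j < h + k)
    (if (((j.+1)%:Z == (k%:Z * (i.+1)%:Z + m%:Z - k%:Z) %[mod (h + k)%:Z])%Z)
     then 1 else 0).

Definition Kmat (h k : nat) : 'M[int]_((h + k).-1) :=
  \matrix_(i < (h + k).-1, j < (h + k).-1)
    Amat h k k (widen_ord (leq_pred _) i) (widen_ord (leq_pred _) j).

From mathcomp Require Import all_boot all_order all_algebra all_fingroup.
From mathcomp Require Import zify.
Set Implicit Arguments. Unset Strict Implicit. Unset Printing Implicit Defensive.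
Import GRing.Theory Num.Theory.
Local Open Scope ring_scope.

(* Index rows and columns from 0, so that sigma becomes the affine bijection
   x |-> k x + (m - 1) of Z/dZ (bijective as gcd(k, d) = gcd(k, h) = 1) and
   A_m(h,k) is its permutation matrix.  This bijection is x |-> k x followed
   by m - 1 steps of the d-cycle x |-> x + 1, whose sign is (-1)^(d-1); hence
   det A_m = (-1)^((d-1)(m-1)) [k/d].  For m = k the bijection fixes
   d - 1 = -1, since k (d - 1) + (k - 1) = k d - 1, so det K = det A_k; and
   (d-1)(k-1) is even because h and k are not both even. *)

Lemma odd_permX (T : finType) (s : {perm T}) n :
  odd_perm (s ^+ n)%g = odd n && odd_perm s.
Proof.
elim: n => [|n IHn]; first by rewrite expg0 odd_perm1.
by rewrite expgSr odd_permM IHn /=; case: (odd n); case: (odd_perm s).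
Qed.

Section AffinePerm.
Variables (d : nat) (d_gt0 : (0 < d)%N).

Definition affine_fun (a b : nat) (x : 'I_d) : 'I_d :=
  Ordinal (ltn_pmod (a * x + b) d_gt0).

Lemma affine_fun_inj a b : coprime a d -> injective (affine_fun a b).
Proof.
move=> co_ad.
suff le_inj (x y : 'I_d) :
    (x <= y)%N -> affine_fun a b x = affine_fun a b y -> x = y.
  move=> x y xy_eq; case: (leqP x y) => [le_xy | /ltnW le_yx]; first exact: le_inj.
  exact/esym/le_inj.
move=> le_xy /(congr1 val) /= /eqP.
rewrite eqn_modDr eq_sym eqn_mod_dvd ?leq_mul // -mulnBr Gauss_dvdr 1?coprime_sym //.
have lt_yx_d : (y - x < d)%N by apply: leq_ltn_trans (leq_subr _ _) (ltn_ord y).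
rewrite /dvdn modn_small // subn_eq0 => le_yx.
by apply/val_inj/eqP; rewrite eqn_leq le_xy.
Qed.

Definition affine_perm a b (co_ad : coprime a d) : 'S_d :=
  perm (@affine_fun_inj a b co_ad).

Lemma affine_permE a b (co_ad : coprime a d) x :
  val (affine_perm b co_ad x) = ((a * x + b) %% d)%N.
Proof. by rewrite permE. Qed.

Definition rotation : 'S_d := affine_perm 1 (coprime1n d).

Lemma rotationXE b x : val ((rotation ^+ b)%g x) = ((x + b) %% d)%N.
Proof.
elim: b => [|b IHb]; first by rewrite expg0 perm1 addn0 modn_small.
by rewrite expgSr permM affine_permE IHb mul1n modnDml addn1 addnS.
Qed.

Lemma affine_perm_rotation a b (co_ad : coprime a d) :
  affine_perm b co_ad = (affine_perm 0 co_ad * rotation ^+ b)%g.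
Proof.
apply/permP => x; apply/val_inj.
by rewrite permM rotationXE !affine_permE addn0 modnDml.
Qed.

End AffinePerm.

Lemma odd_perm_rotation d (d_gt0 : (0 < d)%N) :
  odd_perm (rotation d_gt0) = odd d.-1.
Proof.
case: d d_gt0 => // n n_gt0.
have -> : rotation n_gt0 = lift_perm ord_max ord0 1.
  apply/permP => x; apply/val_inj; rewrite affine_permE mul1n.
  case: (unliftP ord_max x) => [j|] ->; last by rewrite lift_perm_id /= addn1 modnn.
  rewrite lift_perm_lift perm1 /= /bump leqNgt ltn_ord add0n addnC modn_small //.
  by rewrite add1n ltnS ltn_ord.
by rewrite odd_lift_perm odd_perm1 /= !addbF.
Qed.

Lemma odd_affine_perm d (d_gt0 : (0 < d)%N) a b (co_ad : coprime a d) :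
  odd_perm (affine_perm d_gt0 b co_ad) =
  odd (d.-1 * b) (+) affine_perm d_gt0 0 co_ad.
Proof.
by rewrite affine_perm_rotation odd_permM odd_permX odd_perm_rotation oddM
  addbC andbC.
Qed.

Lemma jsymE d k (s : 'S_d) :
  (forall x, s x = mulmod k x) -> jsym d k = (-1) ^+ s.
Proof.
move=> sE; rewrite /jsym; case: pickP => [t /forallP tE | no_t].
  by congr (_ ^+ odd_perm _); apply/permP => x; rewrite sE; apply/eqP.
by have := no_t s; rewrite (introT forallP) // => x; rewrite sE.
Qed.

Lemma jsym_affine_perm d (d_gt0 : (0 < d)%N) k (co_kd : coprime k d) :
  jsym d k = (-1) ^+ affine_perm d_gt0 0 co_kd.
Proof. by apply: jsymE => x; apply/val_inj; rewrite affine_permE addn0. Qed.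

Lemma Amat_perm_mx h k m (d_gt0 : (0 < h + k)%N) (co_kd : coprime k (h + k)) :
  (0 < m)%N -> Amat h k m = perm_mx (affine_perm d_gt0 m.-1 co_kd).
Proof.
move=> m_gt0; apply/matrixP => i j; rewrite !mxE.
have -> : k%:Z * i.+1%:Z + m%:Z - k%:Z = (k * i + m.-1).+1%:Z.
  by rewrite -[in LHS](prednK m_gt0); nia.
rewrite !modz_nat eqz_nat -addn1 -[(_ + m.-1).+1]addn1 eqn_modDr modn_small //.
by rewrite -(inj_eq val_inj) affine_permE eq_sym; case: eqP.
Qed.

Lemma det_fixed_last (R : comPzRingType) d (A : 'M[R]_d) (i0 : 'I_d) :
  val i0 = d.-1 -> (forall j, A i0 j = (j == i0)%:R) ->
  \det A = \det (\matrix_(i < d.-1, j < d.-1)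
                   A (widen_ord (leq_pred d) i) (widen_ord (leq_pred d) j)).
Proof.
move=> i0E A_i0.
rewrite (expand_det_row _ i0) (bigD1 i0) //= big1 ?addr0; last first.
  by move=> j /negbTE j_i0; rewrite A_i0 j_i0 mul0r.
rewrite A_i0 eqxx mul1r /cofactor addnn -signr_odd odd_double mul1r.
have lift_i0 x : lift i0 x = widen_ord (leq_pred d) x.
  by apply/val_inj; rewrite /= /bump i0E leqNgt ltn_ord.
by congr (\det _); apply/matrixP => i j; rewrite !mxE !lift_i0.
Qed.

Lemma affine_perm_fix_last d (d_gt0 : (0 < d)%N) (i0 : 'I_d) k
    (co_kd : coprime k d) :
  (0 < k)%N -> val i0 = d.-1 -> affine_perm d_gt0 k.-1 co_kd i0 = i0.
Proof.
move=> k_gt0 i0E; apply/val_inj; rewrite affine_permE i0E.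
have -> : (k * d.-1 + k.-1 = k.-1 * d + d.-1)%N.
  by rewrite -(prednK d_gt0) -(prednK k_gt0) /=; nia.
by rewrite modnMDl modn_small // ltn_predL.
Qed.

Lemma coprime_even_predD_mul_pred h k : (0 < k)%N -> coprime h k ->
  ~~ odd ((h + k).-1 * k.-1).
Proof.
move=> k_gt0 co_hk.
have odd_hk : odd h || odd k.
  apply: contraLR co_hk; rewrite negb_or => /andP[h_even k_even].
  apply/negP => /eqP gcd1.
  by have := dvdn_gcd 2 h k; rewrite gcd1 !dvdn2 h_even k_even.
case: k k_gt0 odd_hk {co_hk} => // k _; rewrite addnS /= oddM oddD.
by case: (odd h); case: (odd k).
Qed.

Theorem proposition3 (h k m : nat) :
  (1 <= h)%N -> (1 <= k)%N -> coprime h k -> (1 <= m <= h + k)%N ->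
  \det (Amat h k m) = (-1) ^+ ((h + k).-1 * m.-1) * jsym (h + k) k /\
  \det (Kmat h k) = jsym (h + k) k.
Proof.
move=> h_gt0 k_gt0 co_hk /andP[m_gt0 _].
have d_gt0 : (0 < h + k)%N by rewrite addn_gt0 h_gt0.
have co_kd : coprime k (h + k) by rewrite /coprime gcdnDr gcdnC.
have detA m' : (0 < m')%N ->
    \det (Amat h k m') = (-1) ^+ ((h + k).-1 * m'.-1) * jsym (h + k) k.
  move=> m'_gt0; rewrite (Amat_perm_mx d_gt0 co_kd m'_gt0) det_perm.
  by rewrite odd_affine_perm signr_addb signr_odd -jsym_affine_perm.
split; first exact: detA.
have lt_last : ((h + k).-1 < h + k)%N by rewrite ltn_predL.
have fix_last :=
  affine_perm_fix_last (i0 := Ordinal lt_last) d_gt0 co_kd k_gt0 erefl.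
rewrite /Kmat -(det_fixed_last (i0 := Ordinal lt_last)) //; last first.
  by move=> j; rewrite (Amat_perm_mx d_gt0 co_kd k_gt0) !mxE fix_last eq_sym.
rewrite (detA k k_gt0) -signr_odd.
by rewrite (negbTE (coprime_even_predD_mul_pred k_gt0 co_hk)) mul1r.
Qed.
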